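(* Let $R$ be a left localizable ring with $\max\mathrm{Den}_l(R)=\{S_1,\ldots,S_n\}$ (distinct), where $n\geq 2$, and let $\mathfrak{a}_i:=\mathrm{ass}(S_i)$. Then for all $i=1,\ldots,n$, $$S_i\cap\bigcap_{j\neq i}\mathfrak{a}_j=\Big(\bigcap_{j\neq i}\mathfrak{a}_j\Big)\setminus\{0\}\neq\emptyset.$$
   Context: All rings are associative with $1$. A multiplicative subset $S$ of $R$ ($1\in S$, $0\notin S$, closed under multiplication) is a left Ore set if $Sr\cap Rs\neq\emptyset$ for all $r\in R$, $s\in S$; for it, $\mathrm{ass}(S):=\{r\in R: sr=0\text{ for some } s\in S\}$. A left Ore set $S$ is a left denominator set if $rs=0$ ($r\in R$, $s\in S$) implies $tr=0$ for some $t\in S$. $\max\mathrm{Den}_l(R)$ is the set of maximal elements, under inclusion, of the set of left denominator sets of $R$. A ring $R$ is left localizable if every nonzero $r\in R$ lies in some left denominator set. *)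

From mathcomp Require Import all_boot all_algebra.
Set Implicit Arguments. Unset Strict Implicit. Unset Printing Implicit Defensive.
Import GRing.Theory.
Local Open Scope ring_scope.

Section Den.
Variable R : pzRingType.

Definition mult_subset (S : R -> Prop) : Prop :=
  S 1 /\ ~ S 0 /\ (forall a b, S a -> S b -> S (a * b)).

Definition left_Ore (S : R -> Prop) : Prop :=
  mult_subset S /\
  forall r s, S s -> exists s', exists r', S s' /\ s' * r = r' * s.

Definition ass (S : R -> Prop) (r : R) : Prop :=
  exists s, S s /\ s * r = 0.

Definition left_den (S : R -> Prop) : Prop :=
  left_Ore S /\
  forall r s, S s -> r * s = 0 -> exists t, S t /\ t * r = 0.

Definition max_left_den (S : R -> Prop) : Prop :=
  left_den S /\
  forall T, left_den T -> (forall x, S x -> T x) -> forall x, T x -> S x.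

Definition left_localizable : Prop :=
  forall r : R, r <> 0 -> exists S, left_den S /\ S r.

End Den.

From mathcomp Require Import all_boot all_algebra.
From mathcomp Require Import boolp classical_sets.
Local Open Scope ring_scope.
Import GRing.Theory.
Set Implicit Arguments.
Unset Strict Implicit.

(* A left localizable ring is reduced, so whether a product vanishes does not
   depend on the order of its factors.  Hence if a left denominator set D meets
   no element of ass(T) for a maximal T, the multiplicative closure of D and T
   is again a left denominator set, and maximality gives D ⊆ T.  So for j <> i
   the distinct maximal sets S_i, S_j yield some y_j in S_i ∩ a_j, and the
   product of the y_j lies in S_i and in every a_j, these being two-sided
   ideals.  Conversely a nonzero x in all a_j (j <> i) lies in some maximal S_k
   by Zorn's lemma, and S_k ∩ a_k = ∅ forces k = i. *)

Section DenominatorSets.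
Variable R : pzRingType.
Implicit Types (D E : R -> Prop) (x y : R).

Lemma left_den_mult D : left_den D -> mult_subset D.
Proof. by case=> [[]]. Qed.

Lemma left_den_ass_disjoint D x : left_den D -> D x -> ~ ass D x.
Proof.
move=> /left_den_mult[_ [D0 DM]] Dx [s [Ds sx0]].
by apply: D0; rewrite -sx0; apply: DM.
Qed.

Lemma assMr D x y : ass D x -> ass D (x * y).
Proof. by move=> [s [Ds sx0]]; exists s; rewrite mulrA sx0 mul0r. Qed.

Lemma assMl D x y : left_den D -> ass D x -> ass D (y * x).
Proof.
move=> [[_ Ore] _] [s [Ds sx0]].
have [s' [r' [Ds' e]]] := Ore y s Ds.
by exists s'; rewrite mulrA e -mulrA sx0 mulr0.
Qed.

Lemma left_localizable_reduced : left_localizable R ->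
  forall x, x * x = 0 -> x = 0.
Proof.
move=> loc x xx0; apply: contrapT => /loc[D [/left_den_mult[_ [D0 DM]] Dx]].
by apply: D0; rewrite -xx0; apply: DM.
Qed.

End DenominatorSets.

Section ReducedRing.
Variable R : pzRingType.
Hypothesis reduced : forall x : R, x * x = 0 -> x = 0.
Implicit Types a b c d y : R.

Lemma mulr_eq0_rev a b : a * b = 0 -> b * a = 0.
Proof. by move=> ab0; apply: reduced; rewrite mulrA -(mulrA b) ab0 mulr0 mul0r. Qed.

Lemma mulr_eq0_ins a b y : a * b = 0 -> a * y * b = 0.
Proof.
move=> /mulr_eq0_rev ba0; apply: reduced.
by rewrite -!mulrA (mulrA b) ba0 mul0r !mulr0.
Qed.

(* Since [c a b = 0], inserting factors gives [c b a c b = 0], so [(a c b)^2 = 0]. *)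
Lemma mulr3_eq0_swap a b c : a * b * c = 0 -> a * c * b = 0.
Proof.
move=> /mulr_eq0_rev; rewrite mulrA => /(mulr_eq0_ins c).
rewrite -!mulrA => /(mulr_eq0_ins b); rewrite -!mulrA => cbacb0.
by apply: reduced; rewrite -!mulrA cbacb0 mulr0.
Qed.

Lemma mulr4_eq0_swap a b c d : a * b * c * d = 0 -> a * c * b * d = 0.
Proof.
move=> /mulr_eq0_rev; rewrite !mulrA => /mulr3_eq0_swap.
by rewrite -!mulrA => /mulr_eq0_rev; rewrite !mulrA.
Qed.

End ReducedRing.

Section ProductClosure.
Variable R : pzRingType.
Variables D E : R -> Prop.

Inductive prod_closure : R -> Prop :=
| prod_closure1 : prod_closure 1
| prod_closureM y x : D y \/ E y -> prod_closure x -> prod_closure (y * x).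

Lemma prod_closure_mul x y : prod_closure x -> prod_closure y -> prod_closure (x * y).
Proof.
move=> px py; elim: px => [|z {}x DEz _ IH]; first by rewrite mul1r.
by rewrite -mulrA; apply: prod_closureM.
Qed.

Lemma prod_closure_single y : D y \/ E y -> prod_closure y.
Proof. by move=> DEy; rewrite -[y]mulr1; apply: prod_closureM DEy prod_closure1. Qed.

Hypotheses (denD : left_den D) (denE : left_den E).

Lemma prod_closure_left_den : ~ prod_closure 0 -> left_den prod_closure.
Proof.
have [[_ OreD] annD] := denD; have [[_ OreE] annE] := denE.
have OreDE r y : D y \/ E y -> exists y' r', (D y' \/ E y') /\ y' * r = r' * y.
  case=> [/(OreD r)|/(OreE r)] [y' [r' [? e]]]; by exists y', r'; split; auto.
have annDE r y : D y \/ E y -> r * y = 0 -> exists t, (D t \/ E t) /\ t * r = 0.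
  case=> [/(annD r)|/(annE r)] h /h [t [? e]]; by exists t; split; auto.
move=> nz0; split; first split.
- by split; [exact: prod_closure1 | split=> //; exact: prod_closure_mul].
- move=> r s ps; elim: ps r => [|y x DEy _ IH] r.
    by exists 1, r; split; [exact: prod_closure1 | rewrite mul1r mulr1].
  have [u [r1 [pu e1]]] := IH r; have [y' [r2 [DEy' e2]]] := OreDE r1 y DEy.
  exists (y' * u), r2; split; first exact: prod_closureM.
  by rewrite -mulrA e1 mulrA e2 mulrA.
- move=> r s ps; elim: ps r => [|y x DEy _ IH] r.
    by rewrite mulr1 => ->; exists 1; split; [exact: prod_closure1 | rewrite mulr0].
  rewrite mulrA => /IH[u [pu]]; rewrite mulrA => /(annDE _ _ DEy)[t [DEt tur0]].
  by exists (t * u); split; [exact: prod_closureM | rewrite -mulrA].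
Qed.

(* In a reduced ring the factors of an element of the closure can be sorted,
   so an annihilator of it also annihilates a product [d * e] with [d] in [D]
   and [e] in [E]. *)
Lemma prod_closure_annihilator (reduced : forall x : R, x * x = 0 -> x = 0) x :
  prod_closure x ->
  exists d e, [/\ D d, E e & forall z, z * x = 0 -> z * d * e = 0].
Proof.
have [D1 [_ DM]] := left_den_mult denD; have [E1 [_ EM]] := left_den_mult denE.
elim=> [|y {}x DEy _ [d [e [Dd Ee ann]]]].
  by exists 1, 1; split=> // z; rewrite !mulr1.
case: DEy => [Dy|Ey].
- by exists (y * d), e; split=> [||z]; [exact: DM | by [] | rewrite mulrA !(mulrA z) => /ann].
- exists d, (y * e); split=> [||z]; [by [] | exact: EM |].
  by rewrite mulrA => /ann; rewrite !mulrA => /mulr4_eq0_swap; apply.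
Qed.

Lemma prod_closure_neq0 (reduced : forall x : R, x * x = 0 -> x = 0) :
  (forall x, D x -> ~ ass E x) -> ~ prod_closure 0.
Proof.
move=> disj /(prod_closure_annihilator reduced)[d [e [Dd Ee /(_ 1)]]].
rewrite mulr0 mul1r => /(_ erefl) de0.
have [t [Et td0]] := denE.2 d e Ee de0.
by apply: (disj d Dd); exists t.
Qed.

End ProductClosure.

Lemma max_left_den_absorb (R : pzRingType) (D E : R -> Prop) :
  (forall x : R, x * x = 0 -> x = 0) -> left_den D -> max_left_den E ->
  (forall x, D x -> ~ ass E x) -> forall x, D x -> E x.
Proof.
move=> reduced denD [denE maxE] disj x Dx.
have den_cl := prod_closure_left_den denD denE (prod_closure_neq0 denD denE reduced disj).
apply: (maxE _ den_cl); last by apply: prod_closure_single; left.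
by move=> y Ey; apply: prod_closure_single; right.
Qed.

Lemma directed_union_left_den (R : pzRingType) (I : Type) (i0 : I)
    (A : I -> R -> Prop) :
  (forall i, left_den (A i)) ->
  (forall i j, exists k, (forall x, A i x -> A k x) /\ (forall x, A j x -> A k x)) ->
  left_den (fun x => exists i, A i x).
Proof.
move=> den dir; split; first split; first split.
- by exists i0; have [D1 _] := left_den_mult (den i0).
- split; first by move=> [i]; have [_ [D0 _]] := left_den_mult (den i).
  move=> a b [i Aa] [j Ab]; have [k [ik jk]] := dir i j.
  by exists k; have [_ [_ DM]] := left_den_mult (den k); apply: DM; auto.
- move=> r s [i As]; have [s' [r' [As' e]]] := (den i).1.2 r s As.
  by exists s', r'; split=> //; exists i.
- move=> r s [i As] rs0; have [t [At tr0]] := (den i).2 r s As rs0.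
  by exists t; split=> //; exists i.
Qed.

Lemma left_den_sub_max (R : pzRingType) (D : R -> Prop) : left_den D ->
  exists M, max_left_den M /\ forall x, D x -> M x.
Proof.
move=> denD.
pose T := {A : R -> Prop | left_den A /\ forall x, D x -> A x}.
pose sub (A B : T) := `[< forall x, sval A x -> sval B x >].
have t0 : T := exist _ D (conj denD (fun x Dx => Dx)).
have [||C chainC|M maxM] := @ZL_preorder T t0 sub.
- by move=> A; apply/asboolP.
- by move=> A B C /asboolP AB /asboolP BC; apply/asboolP => x /AB /BC.
- have [[A0 CA0]|/forallNP C0] := pselect (exists A, C A); last first.
    by exists t0 => A /C0.
  pose I := {A : T | C A}.
  pose U x := exists i : I, sval (sval i) x.
  have denU : left_den U.
    apply: (directed_union_left_den (exist _ A0 CA0)) => [[[A [denA _]] _] //|].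
    move=> [A CA] [B CB]; have [/asboolP AB|/asboolP BA] := chainC _ _ CA CB.
    + by exists (exist _ B CB).
    + by exists (exist _ A CA).
  have DU x : D x -> U x.
    by move=> Dx; exists (exist _ A0 CA0); apply: (proj2 (svalP A0)).
  by exists (exist _ U (conj denU DU)) => A CA; apply/asboolP => x Ax; exists (exist _ A CA).
- have [denM DM] := svalP M.
  exists (sval M); split=> //; split=> // N denN MN.
  have DN x : D x -> N x by move/DM/MN.
  by have /asboolP := maxM (exist _ N (conj denN DN)) (asboolT MN).
Qed.

Lemma max_left_den_cover (R : pzRingType) (x : R) : left_localizable R ->
  x <> 0 -> exists M, max_left_den M /\ M x.
Proof.
move=> loc /loc[D [denD Dx]]; have [M [maxM DM]] := left_den_sub_max denD.
by exists M; split=> //; apply: DM.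
Qed.

Lemma max_left_den_meet_ass (R : pzRingType) (S T : R -> Prop) :
  (forall x : R, x * x = 0 -> x = 0) -> max_left_den S -> max_left_den T ->
  ~ (forall x, S x <-> T x) -> exists y, S y /\ ass T y.
Proof.
move=> reduced [denS maxS] maxT neqST; apply: contrapT => noMeet.
have disj y : S y -> ~ ass T y by move=> Sy Ty; apply: noMeet; exists y.
have ST := max_left_den_absorb reduced denS maxT disj.
by apply: neqST => x; split; [exact: ST | exact: maxS maxT.1 ST x].
Qed.

Lemma common_left_den_ass (R : pzRingType) (I : eqType) (D : R -> Prop)
    (A : I -> R -> Prop) (s : seq I) :
  mult_subset D -> (forall j, left_den (A j)) ->
  (forall j, j \in s -> exists y, D y /\ ass (A j) y) ->
  exists x, D x /\ forall j, j \in s -> ass (A j) x.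
Proof.
move=> [D1 [_ DM]] denA; elim: s => [|j s IH] meet; first by exists 1.
have [x [Dx assx]] := IH (fun k ks => meet k (mem_behead (s := j :: s) ks)).
have [y [Dy assy]] := meet j (mem_head j s).
exists (x * y); split=> [|k]; first exact: DM.
by rewrite inE => /predU1P[->|/assx]; [exact: assMl | exact: assMr].
Qed.

Theorem corollary3p6 (R : pzRingType) (n : nat) (S : 'I_n -> (R -> Prop)) :
  (2 <= n)%N ->
  left_localizable R ->
  (* maxDen_l(R) = {S_1, ..., S_n} *)
  (forall i, max_left_den (S i)) ->
  (forall T : R -> Prop, max_left_den T -> exists i, forall x, T x <-> S i x) ->
  (* the S_i are distinct *)
  (forall i j, i <> j -> ~ (forall x, S i x <-> S j x)) ->
  forall i : 'I_n,
    (forall x : R,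
       (S i x /\ (forall j, j <> i -> ass (S j) x)) <->
       ((forall j, j <> i -> ass (S j) x) /\ x <> 0)) /\
    (exists x : R, (forall j, j <> i -> ass (S j) x) /\ x <> 0).
Proof.
move=> _ loc maxS maxDen distinct i.
have reduced := left_localizable_reduced loc.
have Si_neq0 x : S i x -> x <> 0.
  by move=> Six x0; have [_ []] := left_den_mult (maxS i).1; rewrite -x0.
split=> [x|].
  split=> [[Six assx] | [assx x0]]; first by split=> //; apply: Si_neq0.
  have [M [maxM Mx]] := max_left_den_cover loc x0; have [k Mk] := maxDen M maxM.
  have Skx : S k x by apply/Mk.
  have [ki | ki] := eqVneq k i; first by split=> //; rewrite -ki.
  by exfalso; apply: (left_den_ass_disjoint (maxS k).1 Skx); apply: assx; apply/eqP.
have meet j : j \in [seq j <- enum 'I_n | j != i] -> exists y, S i y /\ ass (S j) y.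
  rewrite mem_filter => /andP[/eqP ji _].
  by apply: max_left_den_meet_ass => //; apply: distinct; apply: nesym.
have [x [Six assx]] :=
  common_left_den_ass (left_den_mult (maxS i).1) (fun j => (maxS j).1) meet.
exists x; split; last exact: Si_neq0.
by move=> j /eqP ji; apply: assx; rewrite mem_filter ji mem_enum.
Qed.
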